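(* If $t\in[1,2]$, then $w(t,a)=w_1(t,a)$ and $w(t,a)/W(t,a)\le 2/3$ for all $a\in[(3t+2)/4,2]$.
   Context: For $(t,a)\in\mathbb R^2$ define $w_1(t,a)=(2t+3)a-(3t^2/4+t)$, $w_2(t,a)=(4t+4)a-(3t^2/2+2t+2)$, $w_3(t,a)=8ta-(3t^2+4t-4)$, $W(t,a)=[(t+2)a-(t^2/2+t)](t+2)$, and $w(t,a)=\min\{w_1(t,a),w_2(t,a),w_3(t,a)\}$. *)

From Stdlib Require Import Reals.
Open Scope R_scope.

Definition w1 (t a : R) : R := (2*t+3)*a - (3*t^2/4 + t).
Definition w2 (t a : R) : R := (4*t+4)*a - (3*t^2/2 + 2*t + 2).
Definition w3 (t a : R) : R := 8*t*a - (3*t^2 + 4*t - 4).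
Definition WW (t a : R) : R := ((t+2)*a - (t^2/2 + t)) * (t+2).
Definition w (t a : R) : R := Rmin (w1 t a) (Rmin (w2 t a) (w3 t a)).

(* Each of w2 - w1, w3 - w1, the inner factor of W, and 2 W - 3 w1 is affine in a
   with a nonnegative slope when t >= 1, and is nonnegative at the left endpoint
   a = (3t+2)/4; writing each as slope * (a - (3t+2)/4) + (value at the endpoint)
   makes all the inequalities immediate. *)
From Stdlib Require Import Reals Lra Psatz.
Open Scope R_scope.

Section LeftOfEndpoint.

Variables t a : R.

Lemma w2_sub_w1 :
  w2 t a - w1 t a = (2*t+1) * (a - (3*t+2)/4) + 3*(t-1)*(t+2)/4.
Proof. unfold w1, w2; field. Qed.

Lemma w3_sub_w1 :
  w3 t a - w1 t a = (6*t-3) * (a - (3*t+2)/4) + (9*t^2 - 9*t + 10)/4.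
Proof. unfold w1, w3; field. Qed.

Lemma WW_factor :
  WW t a = (t+2) * ((t+2) * (a - (3*t+2)/4) + (t+2)^2/4).
Proof. unfold WW; field. Qed.

Lemma WW_double_sub_w1_triple :
  2 * WW t a - 3 * w1 t a
  = (2*t^2 + 2*t - 1) * (a - (3*t+2)/4) + (t-1)*(2*t+1)*(t+2)/4.
Proof. unfold w1, WW; field. Qed.

Hypothesis ht : 1 <= t.
Hypothesis ha : (3*t+2)/4 <= a.

Lemma w1_le_w2 : w1 t a <= w2 t a.
Proof.
  assert (H := w2_sub_w1).
  assert (0 <= (2*t+1) * (a - (3*t+2)/4)) by (apply Rmult_le_pos; lra).
  assert (0 <= 3*(t-1)*(t+2)/4) by nra.
  lra.
Qed.

Lemma w1_le_w3 : w1 t a <= w3 t a.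
Proof.
  assert (H := w3_sub_w1).
  assert (0 <= (6*t-3) * (a - (3*t+2)/4)) by (apply Rmult_le_pos; lra).
  assert (0 < (9*t^2 - 9*t + 10)/4) by nra.
  lra.
Qed.

Lemma w_eq_w1 : w t a = w1 t a.
Proof.
  unfold w; apply Rmin_left, Rmin_glb; [apply w1_le_w2 | apply w1_le_w3].
Qed.

Lemma WW_pos : 0 < WW t a.
Proof.
  rewrite WW_factor.
  apply Rmult_lt_0_compat; [lra |].
  assert (0 <= (t+2) * (a - (3*t+2)/4)) by (apply Rmult_le_pos; lra).
  assert (0 < (t+2)^2/4) by nra.
  lra.
Qed.

Lemma w1_le_two_thirds_WW : 3 * w1 t a <= 2 * WW t a.
Proof.
  assert (H := WW_double_sub_w1_triple).
  assert (0 <= (2*t^2 + 2*t - 1) * (a - (3*t+2)/4)) by (apply Rmult_le_pos; nra).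
  assert (0 <= (t-1)*(2*t+1)*(t+2)/4).
  { assert (0 <= (t-1)*(2*t+1)) by (apply Rmult_le_pos; lra). nra. }
  lra.
Qed.

End LeftOfEndpoint.

Theorem lemmaA6 (t : R) (ht : 1 <= t <= 2) :
  forall a : R, (3*t+2)/4 <= a <= 2 ->
    w t a = w1 t a /\ w t a / WW t a <= 2/3.
Proof.
  intros a [Ha _].
  destruct ht as [ht1 _].
  assert (Hw := w_eq_w1 t a ht1 Ha).
  assert (HW := WW_pos t a ht1 Ha).
  assert (Hle := w1_le_two_thirds_WW t a ht1 Ha).
  split; [exact Hw |].
  rewrite Hw.
  apply Rmult_le_reg_r with (WW t a); [exact HW |].
  unfold Rdiv at 1; rewrite Rmult_assoc, Rinv_l by lra.
  lra.
Qed.
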